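(* Let $\alpha\in\mathbb{F}_q^*$ and let $\mu\in\mathbb{F}_q[X]\cap\mathbb{F}[X]^0$ be of degree $d$. (a) Suppose $\mu=\mu^{*\alpha}$. If $\zeta^2\ne\alpha$ for every root $\zeta\in\mathbb{F}$ of $\mu$, then $d=2e$ is even and the product of the roots of $\mu$ equals $\alpha^e$. If $\mu=\mu^{*\alpha}$ and $\mu$ is irreducible in $\mathbb{F}_q[X]$, then one of the following occurs: (I) there is $\zeta\in\mathbb{F}_q$ with $\alpha=\zeta^2$, $\mu=X-\zeta$ and $\mu'=X+\zeta$; (II) there is $\zeta\in\mathbb{F}_{q^2}\setminus\mathbb{F}_q$ with $\alpha=\zeta^2$ and $\mu=X^2-\alpha=\mu'$; (III) there is $\zeta\in\mathbb{F}_{q^2}\setminus\mathbb{F}_q$ with $\alpha=-\zeta^2$ and $\mu=X^2+\alpha=\mu'$; (IV) for all roots $\zeta\in\mathbb{F}$ of $\mu$ we have $\alpha\ne\pm\zeta^2$; in this case $d=2e$ is even, $\zeta^{q^e}=\alpha\zeta^{-1}$ for each root $\zeta$, and $\mu\ne\mu'$ if $q$ is odd. Cases (II) and (III) only occur if $q$ is odd. (b) If $\mu$ is irreducible, $d$ and $q$ are odd, and $\mu'=\mu^{*\alpha}$, then $-\alpha$ is a square in $\mathbb{F}_q$.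
   Context: $\mathbb{F}$ is an algebraic closure of $\mathbb{F}_p$ and $q$ is a power of $p$. $\mathbb{F}[X]^0$ is the set of monic separable polynomials over $\mathbb{F}$ with non-zero constant coefficient. For $\mu\in\mathbb{F}[X]^0$: $\mu'$ is the element of $\mathbb{F}[X]^0$ whose roots are the negatives of the roots of $\mu$; $\mu^{*\alpha}$ is the element of $\mathbb{F}[X]^0$ whose roots are $\alpha\zeta^{-1}$ for the roots $\zeta$ of $\mu$. *)

From HB Require Import structures.
From mathcomp Require Import all_boot all_order all_algebra all_field.
Set Implicit Arguments. Unset Strict Implicit. Unset Printing Implicit Defensive.
Import GRing.Theory.
Local Open Scope ring_scope.

Section Defs.
Variable F : closedFieldType.

Definition Fsub (m : nat) : pred F := [pred x | x ^+ m == x].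

Definition inFX0 (mu : {poly F}) : Prop :=
  [/\ mu \is monic, separable_poly mu & mu`_0 != 0].

(* A (chosen) list of the roots of mu, with multiplicity:
   mu = lead_coef mu *: \prod_(z <- roots_of mu) ('X - z%:P). *)
Definition roots_of (mu : {poly F}) : seq F := sval (closed_field_poly_normal mu).

(* mu' : the monic polynomial whose roots are the negatives of those of mu. *)
Definition negpoly (mu : {poly F}) : {poly F} :=
  \prod_(z <- roots_of mu) ('X - (- z)%:P).

(* mu^{*alpha} : the monic polynomial whose roots are alpha * z^-1. *)
Definition starpoly (alpha : F) (mu : {poly F}) : {poly F} :=
  \prod_(z <- roots_of mu) ('X - (alpha * z^-1)%:P).

Definition irreducible_over (S : pred F) (mu : {poly F}) : Prop :=
  (1 < size mu)%N /\
  forall g h : {poly F}, (forall i, g`_i \in S) -> (forall i, h`_i \in S) ->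
    mu = g * h -> size g = 1%N \/ size h = 1%N.
End Defs.

From HB Require Import structures.
From mathcomp Require Import all_boot all_order all_algebra all_field.
From mathcomp Require Import zify.
Import GRing.Theory.
Local Open Scope ring_scope.
Set Implicit Arguments. Unset Strict Implicit. Unset Printing Implicit Defensive.

(* The Frobenius x |-> x^q permutes the roots of mu in F_q[X]; when mu is
   irreducible they form one orbit z, z^q, ..., z^(q^(d-1)), and z^(q^m) = z
   exactly when d divides m.  An involution f of F commuting with the
   Frobenius (x |-> -x, or x |-> c/x with c in F_q) that maps z to another
   root, necessarily some z^(q^j) with j < d, satisfies z^(q^(2j)) = z, so
   d | 2j: either f fixes z, or d is even and f z = z^(q^(d/2)).  Taking f to
   be x |-> alpha/x, x |-> -x and x |-> -alpha/x yields the classification and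
   part (b).  Without irreducibility, x |-> alpha/x is a fixed-point-free
   involution of the roots, which splits them into pairs with product alpha. *)
Lemma expr_fixed_expn (R : pzSemiRingType) (x : R) m i :
  x ^+ m = x -> x ^+ (m ^ i) = x.
Proof.
move=> xm; elim: i => [|i IHi]; first by rewrite expr1.
by rewrite expnSr exprM IHi xm.
Qed.

Lemma frob_period (R : pzSemiRingType) (q k0 : nat) (x : R) :
  (0 < k0)%N -> x ^+ (q ^ k0) = x ->
  exists2 k, (0 < k)%N & forall m, (x ^+ (q ^ m) == x) = (k %| m)%N.
Proof.
move=> k0_gt0 xk0; have ex_k : exists k, (0 < k)%N && (x ^+ (q ^ k) == x).
  by exists k0; rewrite k0_gt0 xk0 eqxx.
case: (ex_minnP ex_k) => k /andP[k_gt0 /eqP xk] k_min; exists k => // m.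
have xkj j : x ^+ (q ^ (k * j)) = x by rewrite expnM expr_fixed_expn.
have xm : x ^+ (q ^ m) = x ^+ (q ^ (m %% k)).
  by rewrite {1}(divn_eq m k) expnD exprM mulnC xkj.
rewrite /dvdn xm; case: (posnP (m %% k)) => [->|r_gt0]; first by rewrite expr1 eqxx.
apply/negbTE/negP => xr.
by have := k_min (m %% k)%N; rewrite r_gt0 xr leqNgt ltn_mod k_gt0 => /(_ isT).
Qed.

Lemma commute_frob_twice (R : pzSemiRingType) (f : R -> R) (q j : nat) (z : R) :
  involutive f -> (forall x, f (x ^+ q) = f x ^+ q) ->
  f z = z ^+ (q ^ j) -> z ^+ (q ^ j.*2) = z.
Proof.
move=> fK f_frob fz; have f_frobn i x : f (x ^+ (q ^ i)) = f x ^+ (q ^ i).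
  by elim: i => [|i IHi]; rewrite ?expr1 // expnSr !exprM f_frob IHi.
by rewrite -addnn expnD exprM -fz -f_frobn -fz fK.
Qed.

Lemma dvdn_double_ltn d j : (d %| j.*2)%N -> (j < d)%N -> j = 0%N \/ j.*2 = d.
Proof. by case/dvdnP => [[|[|c]]]; rewrite ?mulSn -?addnn; lia. Qed.

Definition frob_orbit (R : pzSemiRingType) (q : nat) (x : R) (k : nat) : seq R :=
  mkseq (fun i => x ^+ (q ^ i)) k.

Lemma uniq_frob_orbit (R : pzSemiRingType) (q k : nat) (x : R) :
  (forall m, (x ^+ (q ^ m) == x) = (k %| m)%N) -> uniq (frob_orbit q x k).
Proof.
move=> x_period; apply/mkseq_uniqP => i j; rewrite !inE.
wlog le_ij : i j / (i <= j)%N.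
  by move=> le_sym ? ? ?; case/orP: (leq_total i j) => ?; [|symmetry]; apply: le_sym.
move=> _ lt_jk eq_ij; have : x ^+ (q ^ (i + (k - j))) = x.
  rewrite expnD exprM eq_ij -exprM -expnD (subnKC (ltnW lt_jk)).
  by apply/eqP; rewrite x_period.
move=> /eqP; rewrite x_period => dvd_k.
have : (k <= i + (k - j))%N by apply: dvdn_leq dvd_k; rewrite addn_gt0 subn_gt0 lt_jk orbT.
lia.
Qed.

Lemma perm_map_frob_orbit (R : pzSemiRingType) (q k : nat) (x : R) :
  x ^+ (q ^ k) = x -> perm_eq [seq y ^+ q | y <- frob_orbit q x k] (frob_orbit q x k).
Proof.
case: k => [//|k] x_fix; rewrite /frob_orbit /mkseq -map_comp.
rewrite [X in perm_eq _ X]/= -[1%N]/(1 + 0)%N iotaDl -map_comp.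
rewrite -[k.+1]addn1 iotaD map_cat cats1 perm_rcons /= -exprM -expnSr x_fix expr1.
by rewrite perm_cons; under eq_map do rewrite /= -exprM -expnSr.
Qed.

Lemma prod_div_pairs (F : fieldType) (c : F) (s : seq F) : c != 0 -> uniq s ->
  {in s, forall z, c / z \in s} -> {in s, forall z, c / z != z} ->
  exists e, size s = (2 * e)%N /\ \prod_(z <- s) z = c ^+ e.
Proof.
move=> c_neq0; have [N] := ubnP (size s); elim: N s => // N IHN [|z s].
  by exists 0%N; rewrite big_nil.
rewrite ltnS => size_s /andP[z_notin_s uniq_s] s_cl s_ne; set w := c / z.
have w_in_s : w \in s.
  by have := s_cl z (mem_head z s); rewrite inE (negPf (s_ne z (mem_head z s))).
have divK := divKf c_neq0.
have [||||e [size_e prod_e]] := IHN (rem w s).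
- by rewrite size_rem // (leq_ltn_trans (leq_pred _) size_s).
- exact: rem_uniq.
- move=> y; rewrite !mem_rem_uniq // => /andP[y_neq_w y_in_s].
  have y_neq_z : y != z by apply: contraNneq z_notin_s => <-.
  have := s_cl y; rewrite !inE y_in_s orbT => /(_ isT).
  case/orP => [/eqP cy_z | cy_in_s]; first by move: y_neq_w; rewrite /w -cy_z divK eqxx.
  by rewrite cy_in_s andbT (can_eq divK).
- move=> y; rewrite mem_rem_uniq // => /andP[_ y_in_s].
  by apply: s_ne; rewrite inE y_in_s orbT.
exists e.+1; split; first by rewrite /= (perm_size (perm_to_rem w_in_s)) /= size_e mulnS.
have z_neq0 : z != 0.
  by apply: contraNneq (s_ne z (mem_head z s)) => ->; rewrite invr0 mulr0.
rewrite big_cons (perm_big _ (perm_to_rem w_in_s)) big_cons prod_e mulrA.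
by rewrite [z * w]mulrC divfK ?exprS.
Qed.

Lemma sqr_frob_fixed (F : fieldType) (q : nat) (x : F) :
  (x ^+ 2) ^+ q = x ^+ 2 -> x ^+ q = x \/ x ^+ q = - x.
Proof. by rewrite exprAC => /eqP; rewrite eqf_sqr => /orP[] /eqP; [left|right]. Qed.

Lemma div_frob_commute (F : fieldType) (q : nat) (c : F) :
  c ^+ q = c -> forall x, c / x ^+ q = (c / x) ^+ q.
Proof. by move=> c_fix x; rewrite exprMn exprVn c_fix. Qed.

Lemma odd_pchar_nat (R : nzRingType) (q : nat) :
  [pchar R].-nat q -> (2%:R : R) != 0 -> odd q.
Proof.
move=> q_pchar; apply: contraR => even_q.
have : 2%N \in [pchar R].
  apply: (pnatPpi q_pchar); rewrite mem_primes dvdn2 even_q andbT.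
  by case/andP: q_pchar => ->.
by case/andP.
Qed.

Lemma pchar_nat_two_neq0 (R : nzRingType) (q : nat) :
  [pchar R].-nat q -> (1 < q)%N -> odd q -> (2%:R : R) != 0.
Proof.
move=> q_pchar q_gt1 odd_q; apply/negP => two0.
have pchar2 : 2%N \in [pchar R] by rewrite inE two0 andbT.
have /(pnatPpi q_pchar) : pdiv q \in \pi(q) by rewrite pi_pdiv.
rewrite (pcharf_eq pchar2) => /eqP pdiv2.
by move: (pdiv_dvd q); rewrite pdiv2 dvdn2 odd_q.
Qed.

Lemma separable_X2_addC_two_neq0 (F : fieldType) (c : F) :
  separable_poly ('X^2 + c%:P) -> (2%:R : F) != 0.
Proof.
apply: contraTneq => two0; rewrite unlock derivD derivXn derivC addr0.
rewrite -mulr_natl -polyCMn two0 mul0r coprimep0 -size_poly_eq1.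
by rewrite size_XnaddC.
Qed.

Section RootsOf.
Variable F : closedFieldType.
Implicit Types (mu : {poly F}) (s : seq F).

Lemma roots_ofE mu : mu \is monic -> mu = \prod_(z <- roots_of mu) ('X - z%:P).
Proof.
move=> /monicP mu_monic; rewrite /roots_of.
by case: (closed_field_poly_normal mu) => r /= ->; rewrite mu_monic scale1r.
Qed.

Lemma perm_roots_of s : perm_eq (roots_of (\prod_(z <- s) ('X - z%:P))) s.
Proof. by apply/prod_XsubC_eq; rewrite -roots_ofE ?monic_prod_XsubC. Qed.

Lemma size_roots_of mu : mu \is monic -> size (roots_of mu) = (size mu).-1.
Proof. by move=> mu_monic; rewrite {2}(roots_ofE mu_monic) size_prod_XsubC. Qed.

Lemma uniq_roots_of mu : mu \is monic -> separable_poly mu -> uniq (roots_of mu).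
Proof. by move=> mu_monic; rewrite {1}(roots_ofE mu_monic) separable_prod_XsubC. Qed.

Lemma root_roots_of mu x : mu \is monic -> root mu x = (x \in roots_of mu).
Proof. by move=> mu_monic; rewrite {1}(roots_ofE mu_monic) root_prod_XsubC. Qed.

Lemma negpoly_prod s :
  negpoly (\prod_(z <- s) ('X - z%:P)) = \prod_(z <- s) ('X + z%:P).
Proof.
rewrite /negpoly (perm_big _ (perm_roots_of s)).
by apply: eq_bigr => z _; rewrite polyCN opprK.
Qed.

Lemma root_negpoly mu x : mu \is monic -> root (negpoly mu) x = root mu (- x).
Proof.
move=> mu_monic; rewrite (root_roots_of _ mu_monic) /negpoly.
rewrite -(big_map (fun z => - z) xpredT (fun w => 'X - w%:P)) root_prod_XsubC.
by rewrite -{1}[x]opprK mem_map //; exact: oppr_inj.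
Qed.

Lemma root_starpoly mu alpha z :
  mu \is monic -> root mu z -> root (starpoly alpha mu) (alpha / z).
Proof.
move=> mu_monic; rewrite (root_roots_of _ mu_monic) /starpoly => z_root.
rewrite -(big_map (fun z => alpha / z) xpredT (fun w => 'X - w%:P)).
by rewrite root_prod_XsubC; apply: map_f.
Qed.
End RootsOf.

Section FrobeniusPower.
Variables (F : closedFieldType) (q : nat).
Hypothesis q_pchar : [pchar F].-nat q.

Local Notation Fq := (@Fsub F q).

Definition frob (x : F) := x ^+ q.

Lemma frob_is_nmod_morphism : nmod_morphism frob.
Proof.
split=> [|x y]; last exact: exprDn_pchar.
by rewrite /frob expr0n; case: q q_pchar.
Qed.

Lemma frob_is_monoid_morphism : monoid_morphism frob.
Proof. by split=> [|x y]; rewrite /frob ?expr1n ?exprMn. Qed.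

HB.instance Definition _ := GRing.isNmodMorphism.Build F F frob frob_is_nmod_morphism.
HB.instance Definition _ := GRing.isMonoidMorphism.Build F F frob frob_is_monoid_morphism.

Lemma coef_FsubP (g : {poly F}) :
  (forall i, g`_i \in Fq) <-> map_poly frob g = g.
Proof.
split=> [g_Fq | g_fix i]; first by apply/polyP => i; rewrite coef_map; exact/eqP/g_Fq.
by apply/eqP; rewrite -{2}g_fix coef_map.
Qed.

Lemma root_frob (mu : {poly F}) (z : F) :
  (forall i, mu`_i \in Fq) -> root mu z -> root mu (z ^+ q).
Proof.
move=> /coef_FsubP mu_fix z_root.
by rewrite -[z ^+ q]/(frob z) -mu_fix /root horner_map (eqP z_root) rmorph0.
Qed.

Lemma root_frob_iter (mu : {poly F}) (z : F) i :
  (forall i, mu`_i \in Fq) -> root mu z -> root mu (z ^+ (q ^ i)).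
Proof.
move=> mu_Fq z_root; elim: i => [|i IHi]; first by rewrite expr1.
by rewrite expnSr exprM root_frob.
Qed.

Lemma coef_Fsub_divp (mu g : {poly F}) :
  (forall i, mu`_i \in Fq) -> (forall i, g`_i \in Fq) -> forall i, (mu %/ g)`_i \in Fq.
Proof.
move=> /coef_FsubP mu_fix /coef_FsubP g_fix.
by apply/coef_FsubP; rewrite map_divp mu_fix g_fix.
Qed.

Lemma coef_Fsub_frob_orbit (x : F) k :
  x ^+ (q ^ k) = x -> forall i, (\prod_(w <- frob_orbit q x k) ('X - w%:P))`_i \in Fq.
Proof.
move=> x_fix; apply/coef_FsubP; rewrite rmorph_prod /=.
under eq_bigr do rewrite map_polyXsubC.
rewrite -(big_map frob xpredT (fun w => 'X - w%:P)).
exact/perm_big/perm_map_frob_orbit.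
Qed.

Lemma opp_frob_commute (x : F) : - x ^+ q = (- x) ^+ q.
Proof. by rewrite exprNn_pchar. Qed.
End FrobeniusPower.

Section IrreducibleOverFq.
Variables (F : closedFieldType) (q : nat).
Hypothesis q_pchar : [pchar F].-nat q.
Local Notation Fq := (@Fsub F q).
Variable mu : {poly F}.
Hypotheses (mu_Fq : forall i, mu`_i \in Fq) (mu_monic : mu \is monic).
Hypothesis mu_irr : irreducible_over Fq mu.
Local Notation d := (size mu).-1.

Lemma irreducible_monic_factor (g : {poly F}) :
  g \is monic -> (forall i, g`_i \in Fq) -> (1 < size g)%N -> g %| mu -> mu = g.
Proof.
move=> g_monic g_Fq g_gt1 g_dvd; have mu_eq : mu = mu %/ g * g by rewrite divpK.
have [h_size1|] := mu_irr.2 _ _ (coef_Fsub_divp q_pchar mu_Fq g_Fq) g_Fq mu_eq; last first.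
  by move=> g_size1; rewrite g_size1 in g_gt1.
have h_monic : mu %/ g \is monic by rewrite -(monicMr _ g_monic) -mu_eq.
suff h1 : mu %/ g = 1 by rewrite mu_eq h1 mul1r.
by apply/eqP; rewrite -eqp_monic ?monic1 // -size_poly_eq1 h_size1.
Qed.

Variable z : F.
Hypotheses (z_root : root mu z) (z_periodic : exists2 k, (0 < k)%N & z ^+ (q ^ k) = z).

Lemma irreducible_frob_orbit :
  mu = \prod_(w <- frob_orbit q z d) ('X - w%:P) /\
  forall m, (z ^+ (q ^ m) == z) = (d %| m)%N.
Proof.
have [k0 k0_gt0 z_k0] := z_periodic; have [k k_gt0 z_period] := frob_period k0_gt0 z_k0.
have mu_g : mu = \prod_(w <- frob_orbit q z k) ('X - w%:P).
  apply: irreducible_monic_factor; first exact: monic_prod_XsubC.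
  - by apply: coef_Fsub_frob_orbit => //; apply/eqP; rewrite z_period.
  - by rewrite size_prod_XsubC size_mkseq ltnS.
  apply: uniq_roots_dvdp; last by rewrite uniq_rootsE uniq_frob_orbit.
  by apply/allP => w /mapP[i _ ->]; exact: (root_frob_iter q_pchar i mu_Fq z_root).
by rewrite {2 3}mu_g size_prod_XsubC size_mkseq.
Qed.

Lemma root_frob_orbit w : root mu w -> exists2 j, (j < d)%N & w = z ^+ (q ^ j).
Proof.
rewrite {1}irreducible_frob_orbit.1 root_prod_XsubC => /mapP[j].
by rewrite mem_iota => /andP[_ j_lt_d] ->; exists j.
Qed.

Lemma involution_root_frob (f : F -> F) :
  involutive f -> (forall x, f (x ^+ q) = f x ^+ q) -> root mu (f z) ->
  f z = z \/ ~~ odd d /\ f z = z ^+ (q ^ d./2).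
Proof.
move=> fK f_frob /root_frob_orbit[j j_lt_d fz].
have /eqP := commute_frob_twice fK f_frob fz.
rewrite irreducible_frob_orbit.2 => /dvdn_double_ltn/(_ j_lt_d).
case => [j0|<-]; first by left; rewrite fz j0 expr1.
by right; rewrite odd_double doubleK.
Qed.
End IrreducibleOverFq.

Section SelfReciprocal.
Variables (F : closedFieldType) (q : nat).
Hypothesis q_pchar : [pchar F].-nat q.
Hypothesis F_periodic : forall x : F, exists2 k, (0 < k)%N & x ^+ (q ^ k) = x.
Local Notation Fq := (@Fsub F q).
Variables (alpha : F) (mu : {poly F}).
Hypotheses (alpha_Fq : alpha \in Fq) (alpha_neq0 : alpha != 0).
Hypotheses (mu_Fq : forall i, mu`_i \in Fq) (mu_monic : mu \is monic).
Hypotheses (mu_sep : separable_poly mu) (mu0_neq0 : mu`_0 != 0).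
Local Notation d := (size mu).-1.

Lemma root_neq0 z : root mu z -> z != 0.
Proof. by apply: contraTneq => ->; rewrite /root horner_coef0. Qed.

Lemma selfreciprocal_prod_roots :
  starpoly alpha mu = mu -> (forall z, root mu z -> z ^+ 2 != alpha) ->
  exists e, d = (2 * e)%N /\ \prod_(z <- roots_of mu) z = alpha ^+ e.
Proof.
move=> mu_star z2_neq; rewrite -size_roots_of //.
apply: prod_div_pairs; rewrite ?uniq_roots_of // => z; rewrite -root_roots_of // => z_root.
  by rewrite -root_roots_of // -{1}mu_star root_starpoly.
apply: contra (z2_neq z z_root) => /eqP z_eq.
by rewrite expr2 -{1}z_eq divfK ?root_neq0.
Qed.

Lemma selfreciprocal_degree1 :
  starpoly alpha mu = mu -> d = 1%N ->
  exists z, [/\ z \in Fq, alpha = z ^+ 2, mu = 'X - z%:P & negpoly mu = 'X + z%:P].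
Proof.
move=> mu_star d1; have := size_roots_of mu_monic; rewrite d1.
have := roots_ofE mu_monic; case: (roots_of mu) => [|z [|//]] // mu_prod _.
have mu_z : mu = 'X - z%:P by rewrite mu_prod big_seq1.
have z_root : root mu z by rewrite mu_z root_XsubC.
exists z; split => //.
- by have := root_frob q_pchar mu_Fq z_root; rewrite mu_z root_XsubC.
- have := root_starpoly alpha mu_monic z_root; rewrite mu_star mu_z root_XsubC => /eqP az.
  by rewrite expr2 -{1}az divfK ?root_neq0.
- by rewrite mu_prod negpoly_prod big_seq1.
Qed.

Hypothesis mu_irr : irreducible_over Fq mu.

Lemma irreducible_sqr_root z :
  root mu z -> (1 < d)%N -> (z ^+ 2) ^+ q = z ^+ 2 ->
  [/\ z \in @Fsub F (q ^ 2), z \notin Fq, mu = 'X^2 - (z ^+ 2)%:P & negpoly mu = mu].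
Proof.
move=> z_root d_gt1 z2_fix.
have [mu_orbit z_period] :=
  irreducible_frob_orbit q_pchar mu_Fq mu_monic mu_irr z_root (F_periodic z).
have z_notin_Fq : z \notin Fq by rewrite inE -[q in z ^+ q]expn1 z_period dvdn1 gtn_eqF.
have zq : z ^+ q = - z.
  by case: (sqr_frob_fixed z2_fix) => // zq; rewrite inE zq eqxx in z_notin_Fq.
have zq2 : z ^+ (q ^ 2) = z.
  by apply: (commute_frob_twice (j := 1) opprK (opp_frob_commute q_pchar)); rewrite expn1.
have d2 : d = 2%N.
  have : (d <= 2)%N by apply: dvdn_leq => //; rewrite -z_period zq2.
  by move: d_gt1; case: d => [|[|[|]]].
have mu_prod : mu = \prod_(w <- [:: z; - z]) ('X - w%:P).
  by rewrite {1}mu_orbit d2 /frob_orbit /mkseq /= expr1 expn1 zq.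
split => //; first by rewrite inE zq2.
  by rewrite mu_prod !big_cons big_nil mulr1 polyCN opprK rmorphXn subr_sqr.
by rewrite {1}mu_prod negpoly_prod mu_prod !big_cons !big_nil !mulr1 !polyCN opprK mulrC.
Qed.

Lemma irreducible_has_root : exists z, root mu z.
Proof. by apply/closed_rootP; rewrite neq_ltn mu_irr.1 orbT. Qed.

Hypothesis q_gt1 : (1 < q)%N.

Lemma selfreciprocal_no_sqr_root :
  starpoly alpha mu = mu ->
  (forall z, root mu z -> alpha != z ^+ 2 /\ alpha != - z ^+ 2) ->
  exists e, [/\ d = (2 * e)%N, forall z, root mu z -> z ^+ (q ^ e) = alpha * z^-1
              & odd q -> mu != negpoly mu].
Proof.
move=> mu_star no_sqr.
have [e [d_e _]] : exists e, d = (2 * e)%N /\ \prod_(z <- roots_of mu) z = alpha ^+ e.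
  by apply: selfreciprocal_prod_roots => // z /no_sqr[]; rewrite eq_sym.
have half_e : d./2 = e by rewrite d_e mul2n doubleK.
have frob_e z : root mu z -> z ^+ (q ^ e) = alpha / z.
  move=> z_root; have [||] := involution_root_frob q_pchar mu_Fq mu_monic mu_irr z_root
    (F_periodic z) (divKf alpha_neq0) (div_frob_commute (eqP alpha_Fq)).
  - by rewrite -{1}mu_star root_starpoly.
  - move=> az; have [] := no_sqr z z_root.
    by rewrite expr2 -{1}az divfK ?root_neq0 ?eqxx.
  - by case=> _; rewrite half_e.
exists e; split => // odd_q; apply/negP => /eqP mu_neg.
have [z z_root] := irreducible_has_root.
have [|zz|[_]] := involution_root_frob q_pchar mu_Fq mu_monic mu_irr z_root
  (F_periodic z) opprK (opp_frob_commute q_pchar).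
- by rewrite {1}mu_neg root_negpoly // opprK.
- have : z *+ 2 == 0 by rewrite mulr2n -{1}zz addNr.
  rewrite -mulr_natr mulf_eq0 (negPf (root_neq0 z_root)) /=.
  by rewrite (negPf (pchar_nat_two_neq0 q_pchar q_gt1 odd_q)).
rewrite half_e frob_e // => az; have [_] := no_sqr z z_root.
by rewrite expr2 -mulNr az divfK ?root_neq0 ?eqxx.
Qed.

Lemma selfreciprocal_irreducible_cases :
  starpoly alpha mu = mu ->
  [\/ exists z, [/\ z \in Fq, alpha = z ^+ 2, mu = 'X - z%:P & negpoly mu = 'X + z%:P],
      exists z, [/\ z \in @Fsub F (q ^ 2), z \notin Fq, alpha = z ^+ 2,
                    mu = 'X^2 - alpha%:P & negpoly mu = mu],
      exists z, [/\ z \in @Fsub F (q ^ 2), z \notin Fq, alpha = - z ^+ 2,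
                    mu = 'X^2 + alpha%:P & negpoly mu = mu]
    | (forall z, root mu z -> alpha != z ^+ 2 /\ alpha != - z ^+ 2) /\
      exists e, [/\ d = (2 * e)%N, forall z, root mu z -> z ^+ (q ^ e) = alpha * z^-1
                  & odd q -> mu != negpoly mu]].
Proof.
move=> mu_star; case: (ltnP 1 d) => [d_gt1|d_le1]; last first.
  apply: Or41; apply: selfreciprocal_degree1 => //.
  by move: mu_irr.1 d_le1; case: (size mu) => [|[|[|]]].
case: (boolP (has (fun z => alpha == z ^+ 2) (roots_of mu))) => [/hasP[z]|no_sqr].
  rewrite -root_roots_of // => z_root /eqP az; apply: Or42; exists z.
  have [] := irreducible_sqr_root z_root d_gt1; first by rewrite -az (eqP alpha_Fq).
  by rewrite -az.
case: (boolP (has (fun z => alpha == - z ^+ 2) (roots_of mu))) => [/hasP[z]|no_nsqr].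
  rewrite -root_roots_of // => z_root /eqP az; apply: Or43; exists z.
  have z2_fix : (z ^+ 2) ^+ q = z ^+ 2.
    by rewrite -[z ^+ 2]opprK -az -opp_frob_commute // (eqP alpha_Fq).
  have [z_Fq2 z_notin_Fq mu_eq neg_mu] := irreducible_sqr_root z_root d_gt1 z2_fix.
  by split => //; rewrite mu_eq az polyCN.
have {}no_sqr z : root mu z -> alpha != z ^+ 2 /\ alpha != - z ^+ 2.
  rewrite root_roots_of // => z_root.
  by split; [move/hasPn: no_sqr | move/hasPn: no_nsqr]; apply.
by apply: Or44; split => //; apply: selfreciprocal_no_sqr_root.
Qed.

Lemma negpoly_eq_starpoly_odd :
  odd d -> negpoly mu = starpoly alpha mu -> exists b, b \in Fq /\ - alpha = b ^+ 2.
Proof.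
move=> odd_d neg_star; have [z z_root] := irreducible_has_root.
have fixed f : involutive f -> (forall x, f (x ^+ q) = f x ^+ q) -> root mu (f z) -> f z = z.
  move=> fK f_frob fz_root.
  have [//|[]] := involution_root_frob q_pchar mu_Fq mu_monic mu_irr z_root
    (F_periodic z) fK f_frob fz_root.
  by rewrite odd_d.
have nalpha_Fq : (- alpha) ^+ q = - alpha by rewrite -opp_frob_commute // (eqP alpha_Fq).
have az : - alpha / z = z.
  apply: (fixed (fun x => - alpha / x)); first by apply: divKf; rewrite oppr_eq0.
    exact: div_frob_commute.
  by rewrite mulNr -root_negpoly // neg_star root_starpoly.
have z2 : z ^+ 2 = - alpha by rewrite expr2 -{1}az divfK ?root_neq0.
have [zq|zq] : z ^+ q = z \/ z ^+ q = - z by apply: sqr_frob_fixed; rewrite z2.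
  by exists z; rewrite inE zq z2.
have zz : - z = z by apply: fixed opprK _ _; [exact: opp_frob_commute | rewrite -zq root_frob].
by exists z; rewrite inE zq zz z2.
Qed.
End SelfReciprocal.

Theorem lemma4p1 (F : closedFieldType) (p n : nat)
  (charF : p \in [pchar F])
  (algF : forall x : F, exists k : nat, (0 < k)%N /\ x ^+ (p ^ k) = x)
  (n_gt0 : (0 < n)%N)
  (alpha : F) (alpha_Fq : alpha \in @Fsub F (p ^ n)) (alpha_neq0 : alpha != 0)
  (mu : {poly F}) (mu_Fq : forall i, mu`_i \in @Fsub F (p ^ n)) (mu_0 : inFX0 mu) :
  let q := (p ^ n)%N in
  let d := (size mu).-1 in
  let Fq := @Fsub F q in
  let Fq2 := @Fsub F (q ^ 2) in
  (* (a), first claim *)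
  (starpoly alpha mu = mu ->
     (forall z, root mu z -> z ^+ 2 != alpha) ->
     exists e : nat, d = (2 * e)%N /\ \prod_(z <- roots_of mu) z = alpha ^+ e)
  /\
  (* (a), classification *)
  (starpoly alpha mu = mu -> irreducible_over Fq mu ->
     let caseII := exists z, [/\ z \in Fq2, z \notin Fq, alpha = z ^+ 2,
                                 mu = 'X^2 - alpha%:P & negpoly mu = mu] in
     let caseIII := exists z, [/\ z \in Fq2, z \notin Fq, alpha = - z ^+ 2,
                                 mu = 'X^2 + alpha%:P & negpoly mu = mu] in
     [\/ exists z, [/\ z \in Fq, alpha = z ^+ 2, mu = 'X - z%:P
                     & negpoly mu = 'X + z%:P],
         caseII,
         caseIII
       | (forall z, root mu z -> alpha != z ^+ 2 /\ alpha != - z ^+ 2) /\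
         exists e : nat, [/\ d = (2 * e)%N,
                             forall z, root mu z -> z ^+ (q ^ e) = alpha * z^-1
                           & odd q -> mu != negpoly mu]]
     /\ (caseII -> odd q) /\ (caseIII -> odd q))
  /\
  (* (b) *)
  (irreducible_over Fq mu -> odd d -> odd q -> negpoly mu = starpoly alpha mu ->
     exists b, b \in Fq /\ - alpha = b ^+ 2).

Proof.
move=> q d Fq Fq2; case: mu_0 => mu_monic mu_sep mu0_neq0.
have p_prime := pcharf_prime charF.
have q_pchar : [pchar F].-nat q by rewrite pnatX (pnatE _ p_prime) charF.
have q_gt1 : (1 < q)%N := leq_ltn_trans n_gt0 (ltn_expl _ (prime_gt1 p_prime)).
have F_periodic (x : F) : exists2 k, (0 < k)%N & x ^+ (q ^ k) = x.
  by have [k [k_gt0 xk]] := algF x; exists k; rewrite // /q expnAC expr_fixed_expn.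
split; first exact: selfreciprocal_prod_roots.
split=> [mu_star mu_irr | mu_irr odd_d _]; last exact: negpoly_eq_starpoly_odd.
split; first exact: selfreciprocal_irreducible_cases.
have odd_sep c : mu = 'X^2 + c%:P -> odd q.
  move=> mu_c; apply: (odd_pchar_nat q_pchar).
  by apply: (separable_X2_addC_two_neq0 (c := c)); rewrite -mu_c.
split=> -[z [_ _ _ mu_eq _]]; last exact: odd_sep mu_eq.
by apply: (odd_sep (- alpha)); rewrite polyCN.
Qed.
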